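(* Monitor-triggered temporal logic is strictly more expressive than LTL: for every LTL formula $\phi$ over ${\cal P}$ there is a monitor-triggered formula satisfied by exactly the same infinite traces over $2^{\cal P}$, and there is a monitor-triggered formula whose set of satisfying infinite traces is not the set of satisfying traces of any LTL formula.
   Context: Let ${\cal P}={\cal P}_{in}\cup{\cal P}_{out}$ be a set of propositions. Infinite traces $\sigma=\sigma_0\sigma_1\cdots$ have letters $\sigma_i\subseteq{\cal P}$; $\sigma_{i,j}=\sigma_i\cdots\sigma_j$ and $\sigma_{i,\infty}$ is the suffix from $i$. LTL: $\phi ::= \mathit{tt}\mid\mathit{ff}\mid e\mid\neg e\mid\phi\wedge\phi\mid\phi\vee\phi\mid X\phi\mid\phi U\phi\mid G\phi$ with the standard infinite-trace semantics. Co-safety LTL: the fragment without $G$. Finite-trace semantics of co-safety formulas on $\sigma_{i,j}$ ($j<\infty$): atoms and Boolean connectives evaluated at position $i$ as usual; $\sigma_{i,j}\vdash X\varphi$ iff $j>i$ and $\sigma_{i+1,j}\vdash\varphi$; $\sigma_{i,j}\vdash\varphi U\psi$ iff some $l\in[i,j]$ has $\sigma_{l,j}\vdash\psi$ and $\sigma_{k,j}\vdash\varphi$ for all $k\in[i,l)$. Tight satisfaction $\sigma_{i,j}\Vdash\varphi$: $\sigma_{i,j}\vdash\varphi$ and no $\sigma_{i,k}$ with $i\le k<j$ satisfies $\varphi$. Flagging monitor over $\Sigma=2^{{\cal P}_{in}}$: a tuple $D=\langle \Sigma, \mathbb{V}, \Theta, Q, \theta_0, q_0, F, \perp, \rightarrow\rangle$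 with typed variables $\mathbb{V}$ (arbitrary domains), valuations $\Theta$, finite states $Q$, initial valuation $\theta_0$, initial state $q_0$, flagging states $F\subseteq Q\setminus\{q_0\}$, sink $\perp$, and deterministic transitions $q\xrightarrow{g\mapsto a}q'$ ($q\ne\perp$) with guards $g:\Sigma\times\Theta\to\{\mathit{true},\mathit{false}\}$ and actions $a:\Sigma\times\Theta\to\Theta$. Semantics on configurations $(q,\theta)$ reading $E$: (1) if $q\notin F\cup\{\perp\}$ and a transition from $q$ has true guard, take it and set the valuation to $a(E,\theta)$; (2) if $q\notin F\cup\{\perp\}$ and no guard holds, stay; (3) $\perp$ stays; (4) a state of $F$ moves to $\perp$. On a trace over $2^{\cal P}$ the monitor reads the events $\sigma_i\cap{\cal P}_{in}$. $\sigma_{i,j}\Vdash D$ iff the run from $(q_0,\theta_0)$ on $\sigma_i,\dots,\sigma_j$ ends in a state of $F$. Monitor-triggered formulas: $\pi' ::= D{:}\phi\mid(D;\varphi)^*$ and $\pi ::= \phi\rightarrow\pi'$, with $D$ a monitor, $\phi$ LTL, $\varphi$ co-safety LTL. Semantics: $\sigma_{i,\infty}\vdash D{:}\phi$ iff for all $j\ge i$, $\sigma_{i,j}\Vdash D$ implies $\sigma_{j,\infty}\vdash\phi$. $\sigma_{i,k}\vdash D;\varphi$ iff there is $j\in[i,k]$ with $\sigma_{i,j}\Vdash D$ and $\sigma_{j,k}\Vdash\varphi$. Define restart points of $\sigma$: $0$ is one, and if $p$ is one and $\sigma_{p,k}\vdash D;\varphi$ then $k+1$ is one. $\sigma\vdash(D;\varphi)^*$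 iff for every restart point $p$ and every $i\ge p$ with $\sigma_{p,i}\Vdash D$ there is $k\ge i$ with $\sigma_{p,k}\vdash D;\varphi$. $\sigma\vdash\phi\rightarrow\pi'$ iff $\sigma\vdash\phi$ implies $\sigma\vdash\pi'$. $\sigma\vdash\pi'$ means $\sigma_{0,\infty}\vdash\pi'$. *)

From mathcomp Require Import all_boot.
Set Implicit Arguments. Unset Strict Implicit. Unset Printing Implicit Defensive.

Section MTL.
Variable P : finType.
Variable Pin : {set P}.

Definition trace := nat -> {set P}.

Inductive ltl : Type :=
| Ltt | Lff
| Lat (e : P) | Lnat (e : P)
| Land (f g : ltl) | Lor (f g : ltl)
| LX (f : ltl) | LU (f g : ltl) | LG (f : ltl).

(* infinite-trace semantics: sat s i f  means  s_{i,oo} |- f *)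
Fixpoint sat (s : trace) (i : nat) (f : ltl) : Prop :=
  match f with
  | Ltt => True
  | Lff => False
  | Lat e => e \in s i
  | Lnat e => e \notin s i
  | Land f g => sat s i f /\ sat s i g
  | Lor f g => sat s i f \/ sat s i g
  | LX f => sat s i.+1 f
  | LU f g => exists l, i <= l /\ sat s l g /\ forall k, i <= k < l -> sat s k f
  | LG f => forall k, i <= k -> sat s k f
  end.

Fixpoint cosafe (f : ltl) : bool :=
  match f with
  | Land f g | Lor f g | LU f g => cosafe f && cosafe g
  | LX f => cosafe f
  | LG _ => false
  | _ => true
  end.

(* finite-trace semantics on s_{i,j}; only used for co-safety formulas
   (the G case is irrelevant and set to False) *)
Fixpoint fsat (s : trace) (i j : nat) (f : ltl) : Prop :=
  match f with
  | Ltt => True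
  | Lff => False
  | Lat e => e \in s i
  | Lnat e => e \notin s i
  | Land f g => fsat s i j f /\ fsat s i j g
  | Lor f g => fsat s i j f \/ fsat s i j g
  | LX f => i < j /\ fsat s i.+1 j f
  | LU f g => exists l, i <= l <= j /\ fsat s l j g /\
                        forall k, i <= k < l -> fsat s k j f
  | LG _ => False
  end.

Definition ftight (s : trace) (i j : nat) (f : ltl) : Prop :=
  fsat s i j f /\ forall k, i <= k < j -> ~ fsat s i k f.

(* ---------------- flagging monitors over Sigma = 2^{P_in} ----------------
   Events are the sets  s_i :&: Pin  (subsets of P_in). *)
Record monitor : Type := Monitor {
  mQ : finType;
  mTheta : Type;                             (* valuations of the typed variables *)
  mtheta0 : mTheta;
  mq0 : mQ;
  mF : {set mQ};
  mbot : mQ;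
  mTr : finType;
  msrc : mTr -> mQ;
  mdst : mTr -> mQ;
  mguard : mTr -> {set P} -> mTheta -> bool;
  mact : mTr -> {set P} -> mTheta -> mTheta;
  mq0_notF : mq0 \notin mF;
  mbot_notF : mbot \notin mF;
  msrc_notbot : forall t, msrc t != mbot;
  mdet : forall t1 t2 E th, msrc t1 = msrc t2 ->
           mguard t1 E th -> mguard t2 E th -> t1 = t2
}.

Definition mstep (D : monitor) (c : mQ D * mTheta D) (E : {set P})
  : mQ D * mTheta D :=
  let (q, th) := c in
  if q \in mF D then (mbot D, th)
  else if q == mbot D then (q, th)
  else match [pick t | (msrc t == q) && mguard t E th] with
       | Some t => (mdst t, mact t E th)
       | None => (q, th)
       end.

(* configuration after reading s_i, ..., s_{i+n-1} (events s_k :&: Pin) *)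
Fixpoint mrun (D : monitor) (s : trace) (i n : nat) : mQ D * mTheta D :=
  match n with
  | 0 => (mq0 D, mtheta0 D)
  | n.+1 => mstep (mrun D s i n) (s (i + n) :&: Pin)
  end.

Definition mtight (D : monitor) (s : trace) (i j : nat) : Prop :=
  i <= j /\ (mrun D s i (j - i).+1).1 \in mF D.

Inductive mtf' : Type :=
| MTrig (D : monitor) (phi : ltl)
| MStar (D : monitor) (phi : ltl) (_ : cosafe phi).

Inductive mtf : Type :=
| MImp (phi : ltl) (p : mtf').

Definition seqsat (D : monitor) (phi : ltl) (s : trace) (i k : nat) : Prop :=
  exists j, i <= j <= k /\ mtight D s i j /\ ftight s j k phi.

Inductive restart (D : monitor) (phi : ltl) (s : trace) : nat -> Prop :=
| restart0 : restart D phi s 0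
| restartS p k : restart D phi s p -> seqsat D phi s p k -> restart D phi s k.+1.

Definition mtf'_sat (s : trace) (p : mtf') : Prop :=
  match p with
  | MTrig D phi => forall j, mtight D s 0 j -> sat s j phi
  | MStar D phi _ => forall p, restart D phi s p ->
        forall i, p <= i -> mtight D s p i ->
        exists k, i <= k /\ seqsat D phi s p k
  end.

Definition mtf_sat (s : trace) (p : mtf) : Prop :=
  match p with MImp phi p' => sat s 0 phi -> mtf'_sat s p' end.

End MTL.

From mathcomp Require Import all_boot zify.
Set Implicit Arguments.
Unset Strict Implicit.
Unset Printing Implicit Defensive.

(* A monitor that flags on the first letter it reads turns [D : phi] into
   [phi] itself, so every LTL formula is expressible.  With the same monitor,
   [(D ; p /\ X tt)^*] restarts every two steps and says "p holds at every
   even position", Wolper's classical non-LTL property.  To see that no LTL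
   formula defines it, let [hole p n] be the trace with [p] everywhere except
   at position [n]: by induction on formulas, the truth value of any LTL
   formula on [hole p n] is eventually constant in [n], whereas the property
   holds exactly when [n] is odd. *)

Section MonitorTriggered.

Variable P : finType.
Variable Pin : {set P}.

Implicit Types (s t : trace P) (f g : ltl P) (p : P).

Lemma sat_shift s t : (forall k, s k.+1 = t k) ->
  forall f i, sat s i.+1 f <-> sat t i f.
Proof.
move=> st; elim=> [||e|e|f IHf g IHg|f IHf g IHg|f IHf|f IHf g IHg|f IHf] i /=;
  rewrite ?st //.
- by move: (IHf i) (IHg i); tauto.
- by move: (IHf i) (IHg i); tauto.
- split.
  + case=> [[|l]] [// lt_il [gl fbefore]]; exists l.
    by split=> //; split=> [|k ik]; [rewrite -IHg | rewrite -IHf; apply: fbefore; lia].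
  + case=> l [le_il [gl fbefore]]; exists l.+1.
    by split=> //; split=> [|[|k] ik]; [rewrite IHg | lia | rewrite IHf; apply: fbefore; lia].
- split=> [fall k ik | fall [|k] ik]; first (by rewrite -IHf; apply: fall; lia); first lia.
  by rewrite IHf; apply: fall; lia.
Qed.

Lemma sat_LU_unfold s f g i :
  sat s i (LU f g) <-> sat s i g \/ sat s i f /\ sat s i.+1 (LU f g).
Proof.
split=> /=.
- case=> l [le_il [gl fbefore]].
  have [lt_il|lt_li|eq_il] := ltngtP i l; [|lia|by left; rewrite eq_il].
  right; split; first by apply: fbefore; lia.
  by exists l; split=> //; split=> // k ik; apply: fbefore; lia.
- case=> [gi|[fi [l [lt_il [gl fbefore]]]]].
    by exists i; split=> //; split=> // k; lia.
  exists l; split; first lia; split=> // k ik.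
  by have [lt_ik|lt_ki|<-] := ltngtP i k; [apply: fbefore; lia | lia |].
Qed.

Lemma sat_LG_unfold s f i : sat s i (LG f) <-> sat s i f /\ sat s i.+1 (LG f).
Proof.
split=> /= [fall | [fi fall] k ik]; first by split=> [|k ik]; apply: fall; lia.
by have [lt_ik|lt_ki|<-] := ltngtP i k; [apply: fall; lia | lia |].
Qed.

Definition hole p n : trace P := fun k => if k == n then set0 else [set p].

Lemma mem_hole p n k : (p \in hole p n k) = (k != n).
Proof. by rewrite /hole; case: eqP => _; rewrite ?inE ?eqxx. Qed.

Lemma sat_hole_shift p n f i : sat (hole p n.+1) i.+1 f <-> sat (hole p n) i f.
Proof. exact: sat_shift. Qed.

Lemma sat_hole_eventually_constant p f :
  exists N, forall n, N <= n -> sat (hole p n.+1) 0 f <-> sat (hole p n) 0 f.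
Proof.
elim: f => [||e|e|f [N1 IHf] g [N2 IHg]|f [N1 IHf] g [N2 IHg]|f [N IHf]
            |f [N1 IHf] g [N2 IHg]|f [N IHf]].
- by exists 0.
- by exists 0.
- by exists 1 => [[|n]].
- by exists 1 => [[|n]].
- by exists (maxn N1 N2) => n leNn /=; rewrite IHf ?IHg //; lia.
- by exists (maxn N1 N2) => n leNn /=; rewrite IHf ?IHg //; lia.
- exists N.+1 => [[|n]] leNn //=.
  by rewrite (sat_hole_shift p n.+1 f 0) (sat_hole_shift p n f 0); apply: IHf; lia.
- exists (maxn N1 N2) => n leNn.
  rewrite sat_LU_unfold (sat_hole_shift p n (LU f g) 0) IHf ?IHg; try lia.
  rewrite [sat (hole p n) 0 (LU f g)]sat_LU_unfold; tauto.
- exists N => n leNn.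
  rewrite sat_LG_unfold (sat_hole_shift p n (LG f) 0) IHf //.
  rewrite [sat (hole p n) 0 (LG f)]sat_LG_unfold; tauto.
Qed.

Lemma even_hole p n : (forall j, ~~ odd j -> p \in hole p n j) <-> odd n.
Proof.
split=> [even_p | odd_n j even_j]; last by rewrite mem_hole; apply: contraNneq even_j => ->.
by apply/negPn/negP => /even_p; rewrite mem_hole eqxx.
Qed.

(* States: [None] is initial, [Some true] flagging and [Some false] the sink;
   the only transition fires unconditionally from [None]. *)
Definition now_monitor : monitor P.
Proof.
refine (@Monitor P (option bool) unit tt None [set Some true] (Some false) unit
  (fun _ => None) (fun _ => Some true) (fun _ _ _ => true) (fun _ _ th => th)
  _ _ _ _); by [rewrite inE | rewrite inE | | case; case].
Defined.

Lemma mrun_now_monitor s i n : (mrun Pin now_monitor s i n).1 =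
  if n is 0 then None else if n is 1 then Some true else Some false.
Proof.
elim: n => [|n IHn] //=; case: (mrun Pin now_monitor s i n) IHn => q th /= ->.
case: n => [|[|n]] /=; rewrite ?inE //.
by case: pickP => [//|/(_ tt)].
Qed.

Lemma mtight_now_monitor s i j : mtight Pin now_monitor s i j <-> j = i.
Proof.
rewrite /mtight mrun_now_monitor; split=> [[le_ij]|->]; last by rewrite subnn inE.
by case: (j - i) (subn_eq0 j i) => [|[|k]] /=; rewrite ?inE //; lia.
Qed.

Lemma sat_trigger_now s phi :
  mtf_sat Pin s (MImp (Ltt P) (MTrig now_monitor phi)) <-> sat s 0 phi.
Proof.
split=> [trig | phi0 _ j /mtight_now_monitor -> //].
by apply: (trig I 0); apply/mtight_now_monitor.
Qed.

Definition step_on p : ltl P := Land (Lat p) (LX (Ltt P)).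

Lemma cosafe_step_on p : cosafe (step_on p). Proof. by []. Qed.

Definition even_positions p : mtf P :=
  MImp (Ltt P) (MStar now_monitor (cosafe_step_on p)).

Lemma ftight_step_on p s j k : ftight s j k (step_on p) <-> p \in s j /\ k = j.+1.
Proof.
split=> [[[pj [lt_jk _]] minimal] | [pj ->]].
- split=> //; have [lt_kj|gt_kj|//] := ltngtP k j.+1; first lia.
  by case: (minimal j.+1); first lia.
- by split=> [//|k' /andP[_ lt_k'j] [_ [lt_jk' _]]]; lia.
Qed.

Lemma seqsat_step_on p s q k :
  seqsat Pin now_monitor (step_on p) s q k <-> p \in s q /\ k = q.+1.
Proof.
split=> [[j [_ [/mtight_now_monitor -> /ftight_step_on //]]] | [pq ->]].
by exists q; split; [lia | split; [apply/mtight_now_monitor | apply/ftight_step_on]].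
Qed.

Lemma restart_step_on_even p s q :
  restart Pin now_monitor (step_on p) s q -> ~~ odd q.
Proof. by elim=> // q0 k _ even_q0 /seqsat_step_on [_ ->] /=; rewrite negbK. Qed.

Lemma sat_even_positions p s :
  mtf_sat Pin s (even_positions p) <-> forall j, ~~ odd j -> p \in s j.
Proof.
split=> /= [star | even_p _ q rq i _ /mtight_now_monitor ->]; last first.
  by exists q.+1; split=> //; apply/seqsat_step_on; split=> //;
    apply: even_p; apply: restart_step_on_even rq.
have p_at_restart m : restart Pin now_monitor (step_on p) s m -> p \in s m.
  move=> rm; have [k [_ /seqsat_step_on []//]] := star I m rm m (leqnn m)
    (proj2 (mtight_now_monitor s m m) erefl).
have restart_double m : restart Pin now_monitor (step_on p) s m.*2.
  elim: m => [|m IHm]; first exact: restart0.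
  by rewrite doubleS; apply: (restartS IHm); apply/seqsat_step_on; split=> //; apply: p_at_restart.
move=> j even_j; rewrite -(odd_double_half j) (negbTE even_j) add0n.
exact: p_at_restart (restart_double _).
Qed.

End MonitorTriggered.

Theorem theorem2 (P : finType) (Pin : {set P}) (HP : 0 < #|P|) :
  (forall phi : ltl P, exists pi : mtf P,
      forall s : trace P, @mtf_sat P Pin s pi <-> sat s 0 phi) /\
  (exists pi : mtf P, forall phi : ltl P,
      ~ (forall s : trace P, sat s 0 phi <-> @mtf_sat P Pin s pi)).
Proof.
split=> [phi | ]; first by exists (MImp (Ltt P) (MTrig (now_monitor P) phi)) => s;
  exact: sat_trigger_now.
have [p _] := card_gt0P HP.
exists (even_positions p) => phi defines_even.
have [N stable] := sat_hole_eventually_constant p phi.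
have := stable N (leqnn N).
rewrite !defines_even !sat_even_positions !even_hole /=.
by case: (odd N); intuition.
Qed.
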